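(* Let $m=m_n$ and $\delta=\delta_n>0$ satisfy $m^2/n\to0$ and $\delta^2 m/n\to0$ as $n\to\infty$, and fix $\varepsilon>0$. Define $\varphi_n:[1/4,3/4]\to\mathbb{R}$ by \[ \varphi_n(x) = h(x) + \frac{m(m+1)}{4n}\big(g(x) - \log 4\big) + \frac{m\delta^2}{n} f(x) + \frac{1}{2n} g(x), \] where $f(x) = ((1-2x)^2+\varepsilon)^{1/2}$, $g(x) = -\log(x(1-x))$ and $h(x) = -x\log x - (1-x)\log(1-x)$. Then for all sufficiently large $n$, $\varphi_n$ is strictly concave on $[1/4,3/4]$ and has a unique maximum at $x=1/2$. Moreover, $\varphi_n''$ converges uniformly to $h''$ on $[1/4,3/4]$ as $n\to\infty$. *)

From Stdlib Require Import Reals Lra.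
From Coquelicot Require Import Coquelicot.
Open Scope R_scope.

Definition f_eps (eps x : R) : R := sqrt ((1 - 2 * x) ^ 2 + eps).
Definition g_fun (x : R) : R := - ln (x * (1 - x)).
Definition h_fun (x : R) : R := - x * ln x - (1 - x) * ln (1 - x).

Definition phi (m : nat -> nat) (delta : nat -> R) (eps : R) (n : nat) (x : R) : R :=
  h_fun x
  + INR (m n) * (INR (m n) + 1) / (4 * INR n) * (g_fun x - ln 4)
  + INR (m n) * delta n ^ 2 / INR n * f_eps eps x
  + 1 / (2 * INR n) * g_fun x.

Definition in_I (x : R) : Prop := 1/4 <= x <= 3/4.

Definition strictly_concave_on_I (F : R -> R) : Prop :=
  forall x y t, in_I x -> in_I y -> x <> y -> 0 < t < 1 ->
    t * F x + (1 - t) * F y < F (t * x + (1 - t) * y).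

(* phi_n is h plus a perturbation A (g - log 4) + B f + C g with A ~ m^2/n,
   B = m delta^2/n and C ~ 1/n, all tending to 0.  On [1/4, 3/4] the second
   derivatives of f and g are bounded while h'' = -1/(x(1-x)) <= -4, so phi_n''
   converges uniformly to h'' and is eventually negative, which makes phi_n
   strictly concave.  Since phi_n(1 - x) = phi_n(x), strict concavity applied
   to x and 1 - x shows that 1/2 is the unique maximiser. *)
From Stdlib Require Import Reals Lra Lia.
From Coquelicot Require Import Coquelicot.
Open Scope R_scope.

Lemma Derive_2_open (U : R -> Prop) (F F1 F2 : R -> R) (x : R) :
  open U -> U x -> (forall y, U y -> is_derive F y (F1 y)) ->
  is_derive F1 x (F2 x) -> Derive_n F 2 x = F2 x.
Proof.
  intros HU Ux HF HF1. apply is_derive_unique.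
  apply is_derive_ext_loc with F1; [|exact HF1].
  apply filter_imp with (2 := HU x Ux). intros y Uy.
  symmetry. apply is_derive_unique. now apply HF.
Qed.

Lemma open_unit_interval : open (fun x => 0 < x < 1).
Proof. exact (open_and _ _ (open_gt 0) (open_lt 1)). Qed.

Section StrictConcavity.

Variables (lo hi : R) (F F1 F2 : R -> R).
Hypothesis HF : forall x, lo <= x <= hi -> is_derive F x (F1 x).
Hypothesis HF1 : forall x, lo <= x <= hi -> is_derive F1 x (F2 x).
Hypothesis HF2 : forall x, lo <= x <= hi -> F2 x < 0.

Lemma derive_decreasing a b : lo <= a -> a < b -> b <= hi -> F1 b < F1 a.
Proof.
  intros Hlo Hab Hhi.
  destruct (MVT_cor2 F1 F2 a b Hab) as [c [Hc Hcab]].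
  { intros c Hc. apply is_derive_Reals, HF1. lra. }
  assert (F2 c < 0) by (apply HF2; lra).
  nra.
Qed.

Lemma strictly_concave_lt x y t : lo <= x -> x < y -> y <= hi -> 0 < t < 1 ->
  t * F x + (1 - t) * F y < F (t * x + (1 - t) * y).
Proof.
  intros Hlo Hxy Hhi Ht.
  set (z := t * x + (1 - t) * y).
  assert (Hxz : x < z) by (unfold z; nra).
  assert (Hzy : z < y) by (unfold z; nra).
  assert (derF : forall c, lo <= c <= hi -> derivable_pt_lim F c (F1 c))
    by (intros c Hc; now apply is_derive_Reals, HF).
  destruct (MVT_cor2 F F1 x z Hxz) as [c1 [E1 Hc1]].
  { intros c Hc. apply derF. lra. }
  destruct (MVT_cor2 F F1 z y Hzy) as [c2 [E2 Hc2]].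
  { intros c Hc. apply derF. lra. }
  assert (Hslope : F1 c2 < F1 c1) by (apply derive_decreasing; lra).
  assert (Hgap : t * F x + (1 - t) * F y - F z = t * (1 - t) * (y - x) * (F1 c2 - F1 c1)).
  { replace (F x) with (F z - F1 c1 * ((1 - t) * (y - x))) by (unfold z in *; nra).
    replace (F y) with (F z + F1 c2 * (t * (y - x))) by (unfold z in *; nra).
    ring. }
  assert (0 < t * (1 - t) * (y - x)) by (apply Rmult_lt_0_compat; nra).
  nra.
Qed.

Lemma strictly_concave_of_derive2_neg x y t :
  lo <= x <= hi -> lo <= y <= hi -> x <> y -> 0 < t < 1 ->
  t * F x + (1 - t) * F y < F (t * x + (1 - t) * y).
Proof.
  intros Hx Hy Hxy Ht. destruct (Rlt_or_le x y) as [Hlt | Hle].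
  - apply strictly_concave_lt; lra.
  - assert (K : (1 - t) * F y + (1 - (1 - t)) * F x < F ((1 - t) * y + (1 - (1 - t)) * x))
      by (apply strictly_concave_lt; lra).
    replace ((1 - t) * y + (1 - (1 - t)) * x) with (t * x + (1 - t) * y) in K by ring.
    lra.
Qed.

End StrictConcavity.

Lemma symmetric_strictly_concave_max (F : R -> R) :
  strictly_concave_on_I F -> (forall x, F (1 - x) = F x) ->
  forall x, in_I x -> x <> 1/2 -> F x < F (1/2).
Proof.
  unfold strictly_concave_on_I, in_I. intros HF Hsym x Hx Hne.
  assert (K := HF x (1 - x) (1/2) Hx ltac:(lra) ltac:(lra) ltac:(lra)).
  rewrite Hsym in K.
  replace (1/2 * x + (1 - 1/2) * (1 - x)) with (1/2) in K by field.
  lra.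
Qed.

Definition phi_coef (eps A B C x : R) : R :=
  h_fun x + A * (g_fun x - ln 4) + B * f_eps eps x + C * g_fun x.

Lemma phi_coef_sym eps A B C x : phi_coef eps A B C (1 - x) = phi_coef eps A B C x.
Proof.
  unfold phi_coef, h_fun, g_fun, f_eps.
  replace (1 - (1 - x)) with x by ring.
  replace ((1 - x) * x) with (x * (1 - x)) by ring.
  replace ((1 - 2 * (1 - x)) ^ 2) with ((1 - 2 * x) ^ 2) by ring.
  ring.
Qed.

Definition h_d2 (x : R) : R := - / (x * (1 - x)).
Definition g_d2 (x : R) : R := / x ^ 2 + / (1 - x) ^ 2.
Definition f_d2 (eps x : R) : R := 4 * eps / f_eps eps x ^ 3.

Definition phi_coef_d1 (eps A B C x : R) : R :=
  (ln (1 - x) - ln x) - (A + C) * ((1 - 2 * x) / (x * (1 - x)))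
  - B * (2 * (1 - 2 * x) / f_eps eps x).

Definition phi_coef_d2 (eps A B C x : R) : R :=
  h_d2 x + (A + C) * g_d2 x + B * f_d2 eps x.

Lemma f_eps_ge_sqrt eps x : 0 < eps -> sqrt eps <= f_eps eps x.
Proof.
  intros He. apply sqrt_le_1_alt.
  pose proof (pow2_ge_0 (1 - 2 * x)). lra.
Qed.

Lemma f_eps_pos eps x : 0 < eps -> 0 < f_eps eps x.
Proof.
  intros He. pose proof (f_eps_ge_sqrt eps x He). pose proof (sqrt_lt_R0 eps He). lra.
Qed.

Lemma f_eps_sqr eps x : 0 < eps -> f_eps eps x ^ 2 = (1 - 2 * x) ^ 2 + eps.
Proof.
  intros He. unfold f_eps. apply pow2_sqrt.
  pose proof (pow2_ge_0 (1 - 2 * x)). lra.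
Qed.

Lemma is_derive_phi_coef eps A B C x : 0 < x < 1 -> 0 < eps ->
  is_derive (phi_coef eps A B C) x (phi_coef_d1 eps A B C x).
Proof.
  intros Hx He. pose proof (f_eps_pos eps x He) as Hf. pose proof (f_eps_sqr eps x He) as Hf2.
  unfold phi_coef, phi_coef_d1, h_fun, g_fun, f_eps in *.
  auto_derive; replace (1 + - x) with (1 - x) by ring;
    replace ((1 + - (2 * x)) * ((1 + - (2 * x)) * 1) + eps) with ((1 - 2 * x) ^ 2 + eps) by ring.
  - repeat split; nra.
  - field. repeat split; nra.
Qed.

Lemma is_derive_phi_coef_d1 eps A B C x : 0 < x < 1 -> 0 < eps ->
  is_derive (phi_coef_d1 eps A B C) x (phi_coef_d2 eps A B C x).
Proof.
  intros Hx He. pose proof (f_eps_pos eps x He) as Hf. pose proof (f_eps_sqr eps x He) as Hf2.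
  unfold phi_coef_d1, phi_coef_d2, h_d2, g_d2, f_d2, f_eps in *.
  auto_derive; replace (1 + - x) with (1 - x) by ring;
    replace ((1 + - (2 * x)) * ((1 + - (2 * x)) * 1) + eps) with ((1 - 2 * x) ^ 2 + eps) by ring.
  - repeat split; nra.
  - set (s := sqrt ((1 - 2 * x) ^ 2 + eps)) in *.
    replace eps with (s ^ 2 - (1 - 2 * x) ^ 2) by lra.
    field. repeat split; nra.
Qed.

Lemma Derive2_phi_coef eps A B C x : 0 < x < 1 -> 0 < eps ->
  Derive_n (phi_coef eps A B C) 2 x = phi_coef_d2 eps A B C x.
Proof.
  intros Hx He. apply Derive_2_open with (1 := open_unit_interval) (F1 := phi_coef_d1 eps A B C).
  - exact Hx.
  - intros y Hy. now apply is_derive_phi_coef.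
  - now apply is_derive_phi_coef_d1.
Qed.

Lemma Derive2_h_fun x : 0 < x < 1 -> Derive_n h_fun 2 x = h_d2 x.
Proof.
  intros Hx. apply Derive_2_open with (1 := open_unit_interval) (F1 := fun y => ln (1 - y) - ln y).
  - exact Hx.
  - intros y Hy. unfold h_fun. auto_derive; replace (1 + - y) with (1 - y) by ring.
    + repeat split; lra.
    + field. lra.
  - unfold h_d2. auto_derive; replace (1 + - x) with (1 - x) by ring.
    + repeat split; lra.
    + field. lra.
Qed.

Lemma phi_coef_strictly_concave eps A B C : 0 < eps ->
  (forall x, in_I x -> phi_coef_d2 eps A B C x < 0) ->
  strictly_concave_on_I (phi_coef eps A B C).
Proof.
  unfold strictly_concave_on_I, in_I. intros He Hneg x y t.
  apply strictly_concave_of_derive2_neg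
    with (F1 := phi_coef_d1 eps A B C) (F2 := phi_coef_d2 eps A B C); intros z Hz.
  - apply is_derive_phi_coef; lra.
  - apply is_derive_phi_coef_d1; lra.
  - exact (Hneg z Hz).
Qed.

Lemma h_d2_le x : in_I x -> h_d2 x <= -4.
Proof.
  unfold in_I, h_d2. intros Hx.
  assert (Hpos : 0 < x * (1 - x)) by nra.
  assert (4 <= / (x * (1 - x))).
  { apply (Rmult_le_reg_r (x * (1 - x))); [exact Hpos|].
    pose proof (pow2_ge_0 (2 * x - 1)). rewrite Rinv_l; nra. }
  lra.
Qed.

Lemma inv_sqr_bounds y : 1/4 <= y -> 0 <= / y ^ 2 <= 16.
Proof.
  intros Hy. assert (Hy2 : 0 < y ^ 2) by nra. split.
  - now apply Rlt_le, Rinv_0_lt_compat.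
  - apply (Rmult_le_reg_r (y ^ 2)); [exact Hy2|]. rewrite Rinv_l; nra.
Qed.

Lemma g_d2_bounds x : in_I x -> 0 <= g_d2 x <= 32.
Proof.
  unfold in_I, g_d2. intros Hx.
  pose proof (inv_sqr_bounds x ltac:(lra)). pose proof (inv_sqr_bounds (1 - x) ltac:(lra)).
  lra.
Qed.

Lemma f_d2_bounds eps x : 0 < eps -> 0 <= f_d2 eps x <= 4 / sqrt eps.
Proof.
  intros He. unfold f_d2.
  pose proof (sqrt_lt_R0 eps He) as Hs. pose proof (f_eps_ge_sqrt eps x He) as Hf.
  assert (Hpos : 0 < eps * sqrt eps) by now apply Rmult_lt_0_compat.
  assert (Hf3 : eps * sqrt eps <= f_eps eps x ^ 3).
  { replace (eps * sqrt eps) with (sqrt eps ^ 3)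
      by (rewrite <- (sqrt_sqrt eps) at 2; [ring | lra]).
    apply pow_incr. lra. }
  split.
  - apply Rlt_le, Rdiv_lt_0_compat; lra.
  - replace (4 / sqrt eps) with (4 * eps / (eps * sqrt eps)) by (field; lra).
    apply Rmult_le_compat_l; [lra|].
    now apply Rinv_le_contravar.
Qed.

Definition phi_coef_gap (eps A B C : R) : R := 32 * (A + C) + 4 / sqrt eps * B.

Lemma phi_coef_d2_near_h eps A B C x : 0 < eps -> 0 <= A -> 0 <= B -> 0 <= C ->
  in_I x -> Rabs (phi_coef_d2 eps A B C x - h_d2 x) <= phi_coef_gap eps A B C.
Proof.
  intros He HA HB HC Hx. unfold phi_coef_d2, phi_coef_gap.
  destruct (g_d2_bounds x Hx). destruct (f_d2_bounds eps x He).
  replace (h_d2 x + (A + C) * g_d2 x + B * f_d2 eps x - h_d2 x)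
    with ((A + C) * g_d2 x + B * f_d2 eps x) by ring.
  rewrite Rabs_pos_eq; nra.
Qed.

(* The coefficients are nonnegative also for [n = 0], where [/ 0 = 0]. *)
Lemma inv_INR_ge0 n : 0 <= / INR n.
Proof.
  destruct n as [|n].
  - simpl. rewrite Rinv_0. lra.
  - apply Rlt_le, Rinv_0_lt_compat, lt_0_INR. lia.
Qed.

Section Coefficients.

Variables (m : nat -> nat) (delta : nat -> R).

Definition coef_log (n : nat) : R := INR (m n) * (INR (m n) + 1) / (4 * INR n).
Definition coef_f (n : nat) : R := INR (m n) * delta n ^ 2 / INR n.
Definition coef_g (n : nat) : R := 1 / (2 * INR n).

Lemma phi_eq_phi_coef eps n :
  phi m delta eps n = phi_coef eps (coef_log n) (coef_f n) (coef_g n).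
Proof. reflexivity. Qed.

Lemma coef_log_bounds n : 0 <= coef_log n <= INR (m n) ^ 2 / INR n / 2.
Proof.
  pose proof (inv_INR_ge0 n). pose proof (pos_INR (m n)).
  assert (INR (m n) <= INR (m n) ^ 2).
  { destruct (m n) as [|k]; [simpl; lra|].
    pose proof (le_INR 1 (S k) ltac:(lia)). simpl in *. nra. }
  unfold coef_log, Rdiv. rewrite Rinv_mult.
  replace (INR (m n) ^ 2 * / INR n * / 2) with (INR (m n) ^ 2 * / 2 * / INR n) by ring.
  split; nra.
Qed.

Lemma coef_f_ge0 n : 0 <= coef_f n.
Proof.
  apply Rmult_le_pos; [|apply inv_INR_ge0].
  apply Rmult_le_pos; [apply pos_INR | apply pow2_ge_0].
Qed.

Lemma coef_g_ge0 n : 0 <= coef_g n.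
Proof.
  unfold coef_g, Rdiv. rewrite Rinv_mult. pose proof (inv_INR_ge0 n). nra.
Qed.

Lemma is_lim_seq_coef_log :
  is_lim_seq (fun n => INR (m n) ^ 2 / INR n) 0 -> is_lim_seq coef_log 0.
Proof.
  intros Hm. apply is_lim_seq_le_le with (fun _ => 0) (fun n => INR (m n) ^ 2 / INR n / 2).
  - exact coef_log_bounds.
  - apply is_lim_seq_const.
  - pose proof (is_lim_seq_scal_r _ (/ 2) _ Hm) as K. simpl in K. rewrite Rmult_0_l in K.
    exact K.
Qed.

Lemma is_lim_seq_coef_f :
  is_lim_seq (fun n => delta n ^ 2 * INR (m n) / INR n) 0 -> is_lim_seq coef_f 0.
Proof. apply is_lim_seq_ext. intros n. unfold coef_f, Rdiv. ring. Qed.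

Lemma is_lim_seq_coef_g : is_lim_seq coef_g 0.
Proof.
  pose proof (is_lim_seq_inv _ _ is_lim_seq_INR ltac:(discriminate)) as Hinv.
  pose proof (is_lim_seq_scal_l _ (/ 2) _ Hinv) as K. simpl in K. rewrite Rmult_0_r in K.
  revert K. apply is_lim_seq_ext. intros n. unfold coef_g, Rdiv. rewrite Rinv_mult. ring.
Qed.

Definition phi_gap (eps : R) (n : nat) : R :=
  phi_coef_gap eps (coef_log n) (coef_f n) (coef_g n).

Lemma phi_d2_near_h eps n x : 0 < eps -> in_I x ->
  Rabs (phi_coef_d2 eps (coef_log n) (coef_f n) (coef_g n) x - h_d2 x) <= phi_gap eps n.
Proof.
  intros He Hx. apply phi_coef_d2_near_h; trivial.
  - apply coef_log_bounds.
  - apply coef_f_ge0.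
  - apply coef_g_ge0.
Qed.

Lemma is_lim_seq_phi_gap eps :
  is_lim_seq (fun n => INR (m n) ^ 2 / INR n) 0 ->
  is_lim_seq (fun n => delta n ^ 2 * INR (m n) / INR n) 0 ->
  is_lim_seq (phi_gap eps) 0.
Proof.
  intros Hm Hmd.
  pose proof (is_lim_seq_plus' _ _ _ _
    (is_lim_seq_scal_l _ 32 _ (is_lim_seq_plus' _ _ _ _
       (is_lim_seq_coef_log Hm) is_lim_seq_coef_g))
    (is_lim_seq_scal_l _ (4 / sqrt eps) _ (is_lim_seq_coef_f Hmd))) as K.
  simpl in K. now rewrite Rplus_0_l, !Rmult_0_r, Rplus_0_l in K.
Qed.

End Coefficients.

Lemma eventually_lt_of_lim0 (u : nat -> R) (e : R) :
  is_lim_seq u 0 -> 0 < e -> exists N, forall n, (N <= n)%nat -> u n < e.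
Proof.
  intros Hu He. apply is_lim_seq_spec in Hu. destruct (Hu (mkposreal e He)) as [N HN].
  exists N. intros n Hn. specialize (HN n Hn). simpl in HN.
  rewrite Rminus_0_r in HN. apply Rabs_def2 in HN. lra.
Qed.

Theorem lemma5p2 (m : nat -> nat) (delta : nat -> R) (eps : R)
  (Hdelta : forall n, 0 < delta n)
  (Hm : is_lim_seq (fun n => INR (m n) ^ 2 / INR n) 0)
  (Hmd : is_lim_seq (fun n => delta n ^ 2 * INR (m n) / INR n) 0)
  (Heps : 0 < eps) :
  (exists N : nat, forall n : nat, (N <= n)%nat ->
     strictly_concave_on_I (phi m delta eps n)
     /\ in_I (1/2)
     /\ (forall x, in_I x -> x <> 1/2 -> phi m delta eps n x < phi m delta eps n (1/2)))
  /\
  (forall e : R, 0 < e -> exists N : nat, forall n : nat, (N <= n)%nat ->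
     forall x, in_I x ->
       Rabs (Derive_n (phi m delta eps n) 2 x - Derive_n h_fun 2 x) < e).
Proof.
  assert (Hgap := is_lim_seq_phi_gap m delta eps Hm Hmd).
  split.
  - destruct (eventually_lt_of_lim0 _ 4 Hgap ltac:(lra)) as [N HN].
    exists N. intros n Hn. rewrite phi_eq_phi_coef.
    assert (Hconc : strictly_concave_on_I
              (phi_coef eps (coef_log m n) (coef_f m delta n) (coef_g n))).
    { apply phi_coef_strictly_concave; [exact Heps|]. intros x Hx.
      pose proof (phi_d2_near_h m delta eps n x Heps Hx) as K. apply Rabs_le_between' in K.
      pose proof (h_d2_le x Hx). pose proof (HN n Hn). lra. }
    split; [exact Hconc|]. split; [unfold in_I; lra|].
    apply symmetric_strictly_concave_max; [exact Hconc | apply phi_coef_sym].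
  - intros e He. destruct (eventually_lt_of_lim0 _ e Hgap He) as [N HN].
    exists N. intros n Hn x Hx.
    assert (Hx01 : 0 < x < 1) by (unfold in_I in Hx; lra).
    rewrite phi_eq_phi_coef, Derive2_phi_coef, Derive2_h_fun; trivial.
    exact (Rle_lt_trans _ _ _ (phi_d2_near_h m delta eps n x Heps Hx) (HN n Hn)).
Qed.
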